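(* Let $0<\alpha<1$ and $c>0$. With probability 1 there exists $n_0(\omega)$ such that for all $n\ge n_0$, all integers $0\le j\le n-n^\alpha$ and all integers $x$ with $|x|\le c\log n$, $$\xi(S_j+x,n)=\xi(S_j+x,\infty).$$
   Context: Let $0<q<p<1$ with $p+q=1$. Let $X_1,X_2,\dots$ be i.i.d. with $\mathbf P(X_1=1)=p$, $\mathbf P(X_1=-1)=q$, $S_0=0$, $S_n=X_1+\dots+X_n$. For $y\in\mathbb Z$, $n\ge1$, $\xi(y,n)=\#\{k:0<k\le n,\ S_k=y\}$ and $\xi(y,\infty)=\lim_n\xi(y,n)$. *)

From HB Require Import structures.
From mathcomp Require Import all_boot all_order all_algebra.
From mathcomp Require Import all_classical all_reals all_analysis.
Set Implicit Arguments. Unset Strict Implicit. Unset Printing Implicit Defensive.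
Import Order.TTheory GRing.Theory Num.Theory.
Local Open Scope classical_set_scope.
Local Open Scope ring_scope.

(* X 0, X 1, X 2, ... play the role of X_1, X_2, X_3, ... in the paper. *)
Definition walk {T : Type} (X : nat -> T -> int) (n : nat) (w : T) : int :=
  \sum_(i < n) X i w.

Definition xi {T : Type} (X : nat -> T -> int) (y : int) (n : nat) (w : T) : nat :=
  count (fun k => walk X k w == y) (iota 1 n).

Definition xi_inf {R : realType} {T : Type} (X : nat -> T -> int) (y : int) (w : T)
  : \bar R := limn (fun n => ((xi X y n w)%:R : R)%:E).

Definition indep_int {d : measure_display} {T : measurableType d} {R : realType}
  (P : probability T R) (X : nat -> T -> int) : Prop :=
  (forall k (v : int), measurable [set w | X k w = v]) /\
  (forall (I : seq nat) (v : nat -> int), uniq I ->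
     P (\big[setI/setT]_(k <- I) [set w | X k w = v k]) =
     (\prod_(k <- I) P [set w | X k w = v k])%E).

From mathcomp Require Import all_boot all_order all_algebra.
From mathcomp Require Import all_classical all_reals all_analysis.
From mathcomp Require Import ring lra.
Import Order.TTheory GRing.Theory Num.Theory.
Local Open Scope classical_set_scope.
Local Open Scope ring_scope.

(* Chernoff's bound with tilt a = 2p gives P(S_(j+m) - S_j <= K) <= a^K rho^m,
   where rho = E[a^(-X)] = 1/2 + 2pq < 1.  Hence the probability that, for some
   j <= n - n^alpha, the walk comes back after time n to a level at most
   S_j + c log n is at most n a^(c log n) rho^(n^alpha) / (1 - rho), which is
   O(1/n^2) because the stretched exponential beats every power of n.  By
   Borel-Cantelli this happens for finitely many n only, almost surely; and when
   it does not happen, no level S_j + x with x <= c log n is visited after time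
   n, i.e. xi(S_j + x, n) = xi(S_j + x, oo). *)

Lemma walkD {T : Type} (X : nat -> T -> int) (j m : nat) (w : T) :
  walk X (j + m) w = walk X j w + \sum_(i < m) X (j + i)%N w.
Proof. by rewrite /walk big_split_ord. Qed.

Lemma xi_eq_xi_inf {R : realType} {T : Type} (X : nat -> T -> int) (y : int)
    (n : nat) (w : T) :
  (forall k, (n < k)%N -> walk X k w != y) ->
  ((xi X y n w)%:R : R)%:E = xi_inf X y w.
Proof.
move=> no_visit; rewrite /xi_inf; apply/esym/lim_near_cst => //.
near=> N; have nN : (n <= N)%N by near: N; exists n.
rewrite /xi -(subnKC nN) iotaD count_cat.
rewrite [X in (_ + X)%N](@eq_in_count _ _ pred0) ?count_pred0 ?addn0 // => k.
by rewrite mem_iota add1n => /andP[nk _]; exact/negbTE/no_visit.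
Unshelve. all: end_near.
Qed.

Lemma le_measure_bigsetU {d} {R : realFieldType} {T : ringOfSetsType d}
  (mu : {content set T -> \bar R}) {I : Type} (r : seq I) (P : pred I) (F : I -> set T) :
  (forall i, measurable (F i)) ->
  (mu (\big[setU/set0]_(i <- r | P i) F i) <= \sum_(i <- r | P i) mu (F i))%E.
Proof.
move=> mF; elim: r => [|i r IH]; first by rewrite !big_nil measure0.
rewrite !big_cons; case: (P i) => //.
apply: le_trans (measureU2 _ _ _) (leeD _ IH) => //.
exact: bigsetU_measurable.
Qed.

Lemma ae_eventually_notin {d} {T : measurableType d} {R : realType}
    (mu : {measure set T -> \bar R}) (F : (set T)^nat) :
  (forall k, measurable (F k)) -> (\sum_(n <oo) mu (F n) < +oo)%E ->
  \forall w \ae mu, exists N, forall n, (N <= n)%N -> ~ F n w.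
Proof.
move=> mF sumF; exists (lim_sup_set F); split.
- by apply: bigcapT_measurable => k; exact: bigcup_measurable.
- exact: lim_sup_set_cvg0.
move=> w /= never N _; apply: contrapT => notF; apply: never.
by exists N => n Nn Fn; apply: notF; exists n.
Qed.

Lemma eseries_geometric {R : realType} (a x : R) : 0 <= x -> x < 1 ->
  (\sum_(i <oo) (a * x ^+ i)%:E = (a / (1 - x))%:E)%E.
Proof.
move=> x0 x1; apply/cvg_lim => //.
apply: cvg_EFin; first by apply: nearW => n; rewrite sumEFin.
have -> : fine \o (fun n => \sum_(0 <= i < n) (a * x ^+ i)%:E)%E = series (geometric a x).
  by apply/funext => n /=; rewrite sumEFin.
by apply: cvg_geometric_series; rewrite ger0_norm.
Qed.

Lemma nneseries_inv_succ_mul_lty {R : realType} (D : R) :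
  (\sum_(n <oo) (D / (n.+1%:R * n.+2%:R))%:E < +oo)%E.
Proof.
pose f (n : nat) : R := - n.+1%:R^-1.
have f_nd : {homo f : x y / (x <= y)%N >-> x <= y}.
  by move=> x y xy; rewrite lerN2 lef_pV2 ?posrE // ler_nat ltnS.
have f_lim : limn (EFin \o f) = 0%:E.
  apply/cvg_lim => //; apply: cvg_EFin; first exact: nearW.
  rewrite (_ : fine \o _ = - harmonic); last exact/funext.
  by rewrite -oppr0; apply: cvgN; exact: cvg_harmonic.
have := nondecreasing_telescope_sumey 0 (_ : limn (EFin \o f) \is a fin_num) f_nd.
rewrite f_lim => /(_ isT) tele.
rewrite (@eq_eseriesr _ _ (fun n => D%:E * ((f n.+1)%:E - (f n)%:E))%E).
  rewrite nneseriesZl; last by move=> n _; rewrite -EFinB lee_fin subr_ge0 f_nd.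
  by rewrite tele -EFinM ltry.
move=> n _; rewrite -EFinB -EFinM /f; congr EFin.
by field; apply/andP; split; apply: lt0r_neq0; have := ler0n R n; lra.
Qed.

Lemma sqr_div4_le_expR {R : realType} (y : R) : 0 <= y -> y ^+ 2 / 4 <= expR y.
Proof.
move=> y0; have -> : expR y = expR (y / 2) ^+ 2 by rewrite -expRM_natl; congr expR; field.
have h := expR_ge1Dx (y / 2).
apply: le_trans (_ : (1 + y / 2) ^+ 2 <= _); first nra.
by rewrite ler_pXn2r // nnegrE; [lra | exact: expR_ge0].
Qed.

Lemma powR_mul_expR_stretched_le1 {R : realType} (b g alpha : R) :
  0 < g -> 0 < alpha ->
  exists N : nat, forall n : nat, (N <= n)%N ->
    (n%:R : R) `^ b * expR (- g * n%:R `^ alpha) <= 1.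
Proof.
(* With L = ln n, g expR (alpha L) >= g (alpha L)^2 / 4 >= |b| L once L >= L0. *)
move=> g0 alpha0; set L0 := 4 * `|b| / (g * alpha ^+ 2).
have L00 : 0 <= L0 by rewrite /L0 divr_ge0 // ?mulr_ge0 // ltW.
exists (Num.truncn (expR L0)).+1 => n hn.
have n_gt : expR L0 < n%:R.
  case/andP: (truncn_itv (expR_ge0 L0)) => _ /lt_le_trans; apply.
  by rewrite ler_nat.
have n0 : (0 : R) < n%:R by apply: lt_trans n_gt; exact: expR_gt0.
set L := ln (n%:R : R).
have L0L : L0 <= L by rewrite -[L0]expRK ler_ln ?posrE ?expR_gt0 // ltW.
have L_ge0 : 0 <= L by apply: le_trans L0L.
have powRE x : (n%:R : R) `^ x = expR (x * L) by rewrite /powR gt_eqF.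
rewrite !powRE -expRD expR_le1.
have sq := sqr_div4_le_expR (alpha * L) (mulr_ge0 (ltW alpha0) L_ge0).
have bL : b * L <= `|b| * L by rewrite ler_wpM2r // ler_norm.
have : 4 * `|b| <= g * alpha ^+ 2 * L.
  by rewrite -ler_pdivrMl ?mulr_gt0 ?exprn_gt0 // mulrC.
have : g * ((alpha * L) ^+ 2 / 4) <= g * expR (alpha * L) by rewrite ler_pM2l.
nra.
Qed.

Lemma stretched_exp_tail_le {R : realType} (c a rho alpha : R) :
  1 <= a -> 0 < rho < 1 -> 0 < alpha ->
  exists N : nat, forall n : nat, (N <= n)%N ->
    forall K : int, K%:~R <= c * ln (n%:R : R) ->
    n.+1%:R * (a ^ K * rho `^ (n%:R `^ alpha)) <= 12 / (n.+1%:R * n.+2%:R).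
Proof.
move=> a1 /andP[rho0 rho1] alpha0.
have g0 : 0 < - ln rho by rewrite oppr_gt0 ln_lt0 // rho0.
have [N HN] := powR_mul_expR_stretched_le1 (3 + c * ln a) _ _ g0 alpha0.
exists N.+1 => n hn K hK.
rewrite ler_pdivlMr ?mulr_gt0 // mulrAC [_ * (_ * n.+2%:R)]mulrA -expr2.
have n1 : (1 : R) <= n%:R by rewrite ler1n (leq_trans _ hn).
have n0 : (0 : R) < n%:R by lra.
have poly : n.+1%:R ^+ 2 * n.+2%:R <= 12 * (n%:R : R) `^ 3.
  rewrite powR_mulrn ?ler0n // -natr1 -(natr1 n.+1) -natr1; nra.
have aK : a ^ K <= n%:R `^ (c * ln a).
  rewrite -powR_intmul; last lra.
  apply: le_trans (ler_powR a1 hK) _.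
  by rewrite /powR !gt_eqF //; last lra; rewrite mulrAC.
have rhoE : rho `^ (n%:R `^ alpha) = expR (- (- ln rho) * n%:R `^ alpha).
  by rewrite opprK /powR gt_eqF // mulrC.
apply: le_trans (_ : 12 * n%:R `^ 3 * (n%:R `^ (c * ln a) * rho `^ (n%:R `^ alpha)) <= _).
  have a0 : 0 <= a by apply: le_trans a1.
  apply: ler_pM poly _; first by rewrite mulr_ge0.
    by rewrite mulr_ge0 ?powR_ge0 ?exprz_ge0.
  by rewrite ler_wpM2r ?powR_ge0.
rewrite -mulrA [_ `^ 3 * _]mulrA -powRD; last by apply/implyP => _; rewrite gt_eqF.
rewrite rhoE -[X in _ <= X]mulr1 ler_wpM2l //.
by apply: HN; apply: ltnW.
Qed.

Lemma prod_le_exprz_tilt {R : realFieldType} {I : Type} (r : seq I) (w : I -> R)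
    (s : I -> int) (a : R) (K : int) :
  1 <= a -> (forall i, 0 <= w i) -> \sum_(i <- r) s i <= K ->
  \prod_(i <- r) w i <= a ^ K * \prod_(i <- r) (w i * a ^ (- s i)).
Proof.
move=> a1 w0.
have a_unit : a \is a GRing.unit by rewrite unitf_gt0 // (lt_le_trans ltr01).
elim: r K => [|i r IH] K; rewrite ?big_nil ?big_cons.
  by move=> K0; rewrite mulr1 -[1](expr0z a) ler_weXz2l.
move=> hK; have hK' : \sum_(x <- r) s x <= K - s i by rewrite lerBrDl.
apply: le_trans (ler_wpM2l (w0 i) (IH _ hK')) _.
by rewrite exprzDr // le_eqVlt; apply/orP; left; apply/eqP; ring.
Qed.

Definition step (b : bool) : int := if b then 1 else -1.

Definition path_event {T : Type} (X : nat -> T -> int) (j m : nat)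
    (f : {ffun 'I_m -> bool}) : set T :=
  \big[setI/setT]_(i < m) [set w | X (j + i)%N w = step (f i)].

(* When every step is +1 or -1 this is the event S_(j+m) - S_j <= K, split into
   cylinders of step patterns so that independence gives its probability. *)
Definition low_increment_event {T : Type} (X : nat -> T -> int) (j m : nat)
    (K : int) : set T :=
  \big[setU/set0]_(f : {ffun 'I_m -> bool} | \sum_(i < m) step (f i) <= K)
    path_event X j m f.

Lemma mem_low_increment_event {T : Type} (X : nat -> T -> int) (j m : nat) (K : int)
    (w : T) :
  (forall k, X k w \in [:: 1; -1]) -> walk X (j + m) w - walk X j w <= K ->
  low_increment_event X j m K w.
Proof.
move=> pm1 hK; pose f := [ffun i : 'I_m => X (j + i)%N w == 1].
have stepf i : step (f i) = X (j + i)%N w.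
  by rewrite ffunE /step; move: (pm1 (j + i)%N); rewrite !inE => /orP[] /eqP ->.
rewrite /low_increment_event -bigcup_seq_cond; exists f.
  move: hK; rewrite /= mem_index_enum walkD addrC addKr.
  by rewrite (eq_bigr _ (fun i _ => stepf i)).
by rewrite /path_event -bigcap_seq => i _; exact/esym/stepf.
Qed.

(* With +1/-1 steps: some S_k with k = n.+1 + i > n lies at most K above some
   S_j with j <= n - n^alpha. *)
Definition late_revisit_event {R : realType} {T : Type} (X : nat -> T -> int)
    (alpha : R) (K : int) (n : nat) : set T :=
  \big[setU/set0]_(j < n.+1 | j%:R <= n%:R - n%:R `^ alpha :> R)
    \bigcup_i low_increment_event X j (n.+1 + i - j) K.

Lemma mem_late_revisit_event {R : realType} {T : Type} (X : nat -> T -> int)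
    (alpha : R) (K : int) (n j k : nat) (x : int) (w : T) :
  (forall k, X k w \in [:: 1; -1]) -> j%:R <= n%:R - n%:R `^ alpha -> x <= K ->
  (n < k)%N -> walk X k w = walk X j w + x -> late_revisit_event X alpha K n w.
Proof.
move=> pm1 hj hx nk visit.
have jn : (j < n.+1)%N.
  by rewrite ltnS -(ler_nat R); apply: le_trans hj _; rewrite gerDl oppr_le0 powR_ge0.
rewrite /late_revisit_event -bigcup_seq_cond; exists (Ordinal jn).
  by rewrite /= mem_index_enum.
exists (k - n.+1)%N => //=; apply: mem_low_increment_event => //.
have jk : (j <= k)%N by rewrite ltnW // (leq_trans jn).
by rewrite subnKC // subnKC // visit addrC addKr.
Qed.

Section biased_walk.
Context {R : realType} {d : measure_display} {T : measurableType d}.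
Context {P : probability T R} {p q : R} {X : nat -> T -> int}.
Hypotheses (hind : indep_int P X)
  (hX1 : forall k, P [set w | X k w = 1%Z] = p%:E)
  (hXm1 : forall k, P [set w | X k w = (-1)%Z] = q%:E).

Lemma measurable_path_event j m f : measurable (path_event X j m f).
Proof. by apply: bigsetI_measurable => i _; exact: hind.1. Qed.

Lemma measurable_low_increment_event j m K : measurable (low_increment_event X j m K).
Proof. by apply: bigsetU_measurable => f _; exact: measurable_path_event. Qed.

Lemma measurable_late_revisit_event (alpha : R) K n :
  measurable (late_revisit_event X alpha K n).
Proof.
apply: bigsetU_measurable => j _; apply: bigcupT_measurable => i.
exact: measurable_low_increment_event.
Qed.

Lemma probability_path_event j m f :
  P (path_event X j m f) = (\prod_(i < m) (if f i then p else q))%:E.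
Proof.
(* [indep_int] takes the prescribed values as a function on all of [nat]. *)
pose v k := odflt 0%Z (omap (step \o f) (insub (k - j)%N)).
have vE (i : 'I_m) : v (j + i)%N = step (f i) by rewrite /v addKn valK.
have window_uniq : uniq [seq (j + i)%N | i <- index_iota 0 m].
  by rewrite map_inj_uniq ?iota_uniq //; exact: addnI.
rewrite /path_event -prodEFin; under eq_bigr => i _ do rewrite -vE.
move: (hind.2 _ v window_uniq).
rewrite !big_map !big_mkord => ->; apply: eq_bigr => i _.
by rewrite vE; case: (f i).
Qed.

Lemma probability_low_increment_le a j m K : 1 <= a -> 0 <= p -> 0 <= q ->
  (P (low_increment_event X j m K) <= (a ^ K * (p / a + q * a) ^+ m)%:E)%E.
Proof.
move=> a1 p0 q0; have a0 : 0 < a by apply: lt_le_trans a1.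
pose h b := (if b then p else q) * a ^ (- step b).
apply: le_trans (le_measure_bigsetU _ _ _ _ (measurable_path_event j m)) _.
rewrite (eq_bigr _ (fun f _ => probability_path_event j m f)) sumEFin lee_fin.
apply: (@le_trans _ _ (\sum_(f : {ffun 'I_m -> bool}) a ^ K * \prod_(i < m) h (f i))).
  rewrite big_mkcond /=; apply: ler_sum => f _; case: ifP => hK.
    by apply: prod_le_exprz_tilt => // i; case: (f i).
  rewrite mulr_ge0 ?exprz_ge0 ?(ltW a0) //; apply: prodr_ge0 => i _.
  by rewrite mulr_ge0 ?exprz_ge0 ?(ltW a0) //; case: (f i).
rewrite -big_distrr /= -(bigA_distr_bigA (fun _ b => h b)) /= prodr_const card_ord.
by rewrite big_bool /h /= expr1z -exprz_inv expr1z.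
Qed.

Lemma probability_revisit_after_le a rho j N K : 1 <= a -> 0 <= p -> 0 <= q ->
  0 <= rho < 1 -> p / a + q * a <= rho -> (j <= N)%N ->
  (P (\bigcup_i low_increment_event X j (N + i - j) K) <=
   (a ^ K * rho ^+ (N - j) / (1 - rho))%:E)%E.
Proof.
move=> a1 p0 q0 /andP[rho0 rho1] mgf jN.
have a0 : 0 < a by apply: lt_le_trans a1.
apply: le_trans (le_mu_bigcup _ _ _) _.
- by move=> i; exact: measurable_low_increment_event.
- by apply: bigcupT_measurable => i; exact: measurable_low_increment_event.
apply: le_trans (_ : \sum_(i <oo) (a ^ K * rho ^+ (N - j) * rho ^+ i)%:E <= _)%E.
  2: by rewrite eseries_geometric.
apply: lee_nneseries => [i _ _|i _]; first exact: measure_ge0.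
apply: le_trans (probability_low_increment_le _ _ _ _ a1 p0 q0) _.
rewrite lee_fin -mulrA -exprD addnBAC // ler_wpM2l ?exprz_ge0 ?(ltW a0) //.
by apply: lerXn2r mgf; rewrite nnegrE // addr_ge0 // mulr_ge0 // ?invr_ge0 ltW.
Qed.

Lemma probability_late_revisit_le a rho alpha K n : 1 <= a -> 0 <= p -> 0 <= q ->
  0 < rho < 1 -> p / a + q * a <= rho ->
  (P (late_revisit_event X alpha K n) <=
   (n.+1%:R * (a ^ K * rho `^ (n%:R `^ alpha)) / (1 - rho))%:E)%E.
Proof.
move=> a1 p0 q0 /andP[rho0 rho1] mgf.
have a0 : 0 < a by apply: lt_le_trans a1.
set B := a ^ K * rho `^ (n%:R `^ alpha) / (1 - rho).
have B0 : 0 <= B.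
  by rewrite !mulr_ge0 ?exprz_ge0 ?powR_ge0 ?invr_ge0 ?subr_ge0 ?(ltW a0) ?(ltW rho1).
apply: le_trans (le_measure_bigsetU _ _ _ _ _) _.
  by move=> j; apply: bigcupT_measurable => i; exact: measurable_low_increment_event.
rewrite -mulrA -/B (_ : n.+1%:R * B = \sum_(j < n.+1) B).
  2: by rewrite sumr_const card_ord mulr_natl.
rewrite -sumEFin big_mkcond /=; apply: lee_sum => j _; case: ifP => hj //.
have jn : (j <= n.+1)%N by exact: ltnW.
apply: le_trans (probability_revisit_after_le _ _ _ _ _ a1 p0 q0 _ mgf jn) _.
  by rewrite ltW.
rewrite lee_fin /B ler_wpM2r ?invr_ge0 ?subr_ge0 ?(ltW rho1) //.
rewrite ler_wpM2l ?exprz_ge0 ?(ltW a0) //.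
rewrite -powR_mulrn ?(ltW rho0) // ger_powR ?rho0 ?(ltW rho1) // natrB //.
by move: hj; rewrite -natr1; lra.
Qed.

Lemma ae_steps_pm1 : p + q = 1 -> \forall w \ae P, forall k, X k w \in [:: 1; -1].
Proof.
move=> hpq; apply: ae_foralln => k.
have pm1E : [set w | X k w \in [:: 1; -1]] = [set w | X k w = 1] `|` [set w | X k w = -1].
  by apply/seteqP; split => w /=; rewrite !inE; [case/orP => /eqP|case=> ->]; auto.
have m1 := hind.1 k 1; have mN1 := hind.1 k (-1).
exists (~` ([set w | X k w = 1] `|` [set w | X k w = -1])); split.
- exact/measurableC/measurableU.
- have disj : [set w | X k w = 1] `&` [set w | X k w = -1] = set0.
    by apply/seteqP; split => w //= [-> ].
  have PU : P ([set w | X k w = 1] `|` [set w | X k w = -1]) = (p + q)%:E.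
    by rewrite EFinD -(hX1 k) -(hXm1 k); exact: measureU.
  transitivity (1 - P ([set w | X k w = 1%Z] `|` [set w | X k w = (-1)%Z]))%E.
    exact/probability_setC/measurableU.
  by rewrite PU hpq subee.
- by rewrite pm1E.
Qed.
Lemma late_revisit_eventually_le (alpha c : R) : 0 < q -> q < p -> p + q = 1 ->
  0 < alpha -> exists N0 D, 0 <= D /\ forall n, (N0 <= n)%N ->
    (P (late_revisit_event X alpha (Num.floor (c * ln (n%:R : R))) n) <=
     (D / (n.+1%:R * n.+2%:R))%:E)%E.
Proof.
move=> q0 qp pq1 alpha0; have p0 : 0 <= p by lra.
(* At a = 2p the moment generating function E[a^(-X)] = p/a + q a is 1/2 + 2pq. *)
pose a := 2 * p; pose rho := p / a + q * a.
have a1 : 1 <= a by rewrite /a; lra.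
have rho_itv : 0 < rho < 1.
  have -> : rho = 2^-1 + 2 * p * q by rewrite /rho /a; field; lra.
  by apply/andP; split; nra.
have [rho0 rho1] := andP rho_itv.
have [N0 tail] := stretched_exp_tail_le c _ _ _ a1 rho_itv alpha0.
exists N0, (12 / (1 - rho)); split; first by rewrite divr_ge0 // subr_ge0 ltW.
move=> n hn; set K := Num.floor _.
have := probability_late_revisit_le a rho alpha K n a1 p0 (ltW q0) rho_itv (lexx _).
move=> /le_trans; apply.
rewrite lee_fin [X in _ <= X]mulrAC ler_wpM2r ?invr_ge0 ?subr_ge0 ?(ltW rho1) //.
exact/tail/floor_le.
Qed.
End biased_walk.

Theorem lemma7p2 (R : realType) (d : measure_display) (T : measurableType d)
  (P : probability T R) (p q : R) (X : nat -> T -> int)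
  (hq0 : 0 < q) (hqp : q < p) (hp1 : p < 1) (hpq : p + q = 1)
  (hind : indep_int P X)
  (hX1 : forall k, P [set w | X k w = 1%Z] = p%:E)
  (hXm1 : forall k, P [set w | X k w = (-1)%Z] = q%:E)
  (alpha c : R) (ha0 : 0 < alpha) (ha1 : alpha < 1) (hc : 0 < c) :
  {ae P, forall w, exists n0 : nat, forall n : nat, (n0 <= n)%N ->
     forall j : nat, (j%:R <= n%:R - n%:R `^ alpha) ->
     forall x : int, (`|x|%:~R <= c * ln n%:R) ->
       (((xi X (walk X j w + x) n w)%:R : R)%:E = xi_inf X (walk X j w + x) w)}.
Proof.
have [N0 [D [D0 PF]]] := late_revisit_eventually_le hind hX1 hXm1 alpha c hq0 hqp hpq ha0.
pose F n := if (N0 <= n)%N then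
  late_revisit_event X alpha (Num.floor (c * ln (n%:R : R))) n else set0.
have BC : \forall w \ae P, exists N, forall n, (N <= n)%N -> ~ F n w.
  apply: ae_eventually_notin => [n|].
    by rewrite /F; case: ifP => // _; exact: measurable_late_revisit_event hind _ _ _.
  apply: le_lt_trans (nneseries_inv_succ_mul_lty D).
  apply: lee_nneseries => [n _ _|n _]; first exact: measure_ge0.
  by rewrite /F; case: ifP => [/PF //|_]; rewrite measure0 lee_fin divr_ge0.
move: (ae_steps_pm1 hind hX1 hXm1 hpq) BC; apply: filterS2 => w pm1 [N notF].
exists (maxn N N0) => n; rewrite geq_max => /andP[Nn N0n] j hj x hx.
apply: xi_eq_xi_inf => k nk; apply/eqP => visit.
apply: (notF n Nn); rewrite /F N0n.
apply: mem_late_revisit_event pm1 hj _ nk visit.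
by rewrite floor_ge_int (le_trans _ hx) // ler_int ler_norm.
Qed.
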